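(* Let $r,k\geq2$ be integers with $(r,k)\neq(2,2)$. Then $\zeta<r(k-1)$, where $\zeta=r\beta/\alpha$.
   Context: $f_t(\mu)=e^{-\mu}\sum_{i\geq t}\mu^i/i!$. $\mu_{r,k}$ is the unique minimizer over $\mu>0$ of $\mu/f_{k-1}(\mu)^{r-1}$, $\alpha=f_k(\mu_{r,k})$ and $\beta=\frac1r\mu_{r,k}f_{k-1}(\mu_{r,k})$; thus $\zeta=\mu_{r,k}f_{k-1}(\mu_{r,k})/f_k(\mu_{r,k})$. *)

From Stdlib Require Import Reals ClassicalEpsilon.
From Coquelicot Require Import Coquelicot.
Open Scope R_scope.

Definition f (t : nat) (mu : R) : R :=
  exp (- mu) * Series (fun i => if Nat.leb t i then mu ^ i / INR (Factorial.fact i) else 0).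

Definition obj (r k : nat) (mu : R) : R := mu / (f (k - 1) mu) ^ (r - 1).

Definition is_min_obj (r k : nat) (mu : R) : Prop :=
  0 < mu /\ forall x, 0 < x -> obj r k mu <= obj r k x.

Definition mu_rk (r k : nat) : R :=
  epsilon (inhabits 0) (is_min_obj r k).

Definition alpha (r k : nat) : R := f k (mu_rk r k).
Definition beta (r k : nat) : R := / INR r * (mu_rk r k * f (k - 1) (mu_rk r k)).
Definition zeta (r k : nat) : R := INR r * beta r k / alpha r k.

(* At a minimizer mu of mu / f_m(mu)^n (m = k - 1, n = r - 1) the first-order condition
   f_m = n mu f_m' says that the normalized Poisson tail G_m(mu) = e^mu f_m(mu) / (mu^m / m!)
   equals n m; since f_{m+1} = f_m - e^-mu mu^m / m!, this gives zeta = mu G / (G - 1).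
   G_m(x) = sum_j x^j m! / (m+j)! is convex with G_m'(m) = 1, so mu <= n m - (G_m(m) - m),
   and the explicit lower bound G_m(m) > 2 (resp. G_1(1) > 3/2 when n >= 2) turns
   mu n m / (n m - 1) < (n + 1) m into arithmetic. *)

From Stdlib Require Import Reals Lra Lia Psatz ClassicalEpsilon Factorial.
From Coquelicot Require Import Coquelicot.
Open Scope R_scope.

Lemma partial_sum_le_series (a : nat -> R) (l : R) (n : nat) :
  is_series a l -> (forall i, 0 <= a i) -> sum_f_R0 a n <= l.
Proof. intros Ha Hpos. apply sum_incr; [apply is_series_Reals, Ha | exact Hpos]. Qed.

Lemma is_series_le (a b : nat -> R) (la lb : R) :
  is_series a la -> is_series b lb -> (forall i, a i <= b i) -> la <= lb.
Proof.
  intros Ha Hb Hab.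
  assert (Hdiff : b 0%nat - a 0%nat <= lb - la).
  { apply (partial_sum_le_series (fun i => b i - a i) _ 0 (is_series_minus _ _ _ _ Hb Ha)).
    intro i. specialize (Hab i). lra. }
  specialize (Hab 0%nat). lra.
Qed.

Definition exp_term (x : R) (i : nat) : R := x ^ i / INR (fact i).
Definition exp_partial (j : nat) (x : R) : R := sum_f_R0 (exp_term x) j.

Lemma exp_term_pos x i : 0 < x -> 0 < exp_term x i.
Proof. intro. apply Rdiv_lt_0_compat; [apply pow_lt; lra | apply INR_fact_lt_0]. Qed.

Lemma exp_term_S x j : x * exp_term x j = INR (S j) * exp_term x (S j).
Proof.
  unfold exp_term. rewrite fact_simpl, mult_INR.
  assert (INR (S j) <> 0) by (apply not_0_INR; lia).
  assert (INR (fact j) <> 0) by (apply Rgt_not_eq, INR_fact_lt_0).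
  simpl pow. field. split; assumption.
Qed.

Lemma is_derive_exp_term j x : is_derive (fun y => exp_term y (S j)) x (exp_term x j).
Proof.
  unfold exp_term. auto_derive; [exact I|].
  change (match j with 0%nat => 1 | S _ => INR j + 1 end) with (INR (S j)).
  rewrite S_INR, plus_INR, mult_INR.
  assert (0 < INR (fact j)) by apply INR_fact_lt_0.
  assert (0 <= INR j) by apply pos_INR.
  field. nra.
Qed.

Lemma is_series_exp (x : R) : is_series (exp_term x) (exp x).
Proof.
  apply (is_series_ext (fun n => scal (pow_n x n) (/ INR (fact n)))); [|exact (is_exp_Reals x)].
  intro n. rewrite pow_n_pow. unfold scal, exp_term; simpl. unfold mult; simpl. lra.
Qed.

Lemma is_derive_exp_partial j x :
  is_derive (exp_partial j) x (exp_partial j x - exp_term x j).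
Proof.
  induction j as [|j IHj].
  - apply is_derive_ext with (fun _ => 1).
    { intro y. unfold exp_partial, exp_term. simpl. field. }
    unfold exp_partial; simpl. replace (exp_term x 0 - exp_term x 0) with 0 by ring.
    apply (is_derive_const 1).
  - apply is_derive_ext with (fun y => exp_partial j y + exp_term y (S j)); [reflexivity|].
    replace (exp_partial (S j) x - exp_term x (S j))
      with ((exp_partial j x - exp_term x j) + exp_term x j)
      by (unfold exp_partial; simpl; ring).
    exact (is_derive_plus _ _ _ _ _ IHj (is_derive_exp_term j x)).
Qed.

Lemma is_series_exp_shift m x : (1 <= m)%nat ->
  is_series (fun j => exp_term x (m + j)) (exp x - exp_partial (m - 1) x).
Proof.
  intro Hm. apply is_series_incr_n; [lia|].
  match goal with |- is_series _ ?l => replace l with (exp x) end; [apply is_series_exp|].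
  rewrite sum_n_Reals. unfold plus, exp_partial; simpl.
  replace (pred m) with (m - 1)%nat by lia. ring.
Qed.

Lemma f_closed m x : (1 <= m)%nat -> f m x = 1 - exp (- x) * exp_partial (m - 1) x.
Proof.
  intro Hm. unfold f.
  set (a := fun i => if Nat.leb m i then x ^ i / INR (fact i) else 0).
  assert (Ha : is_series a (exp x - exp_partial (m - 1) x)).
  { assert (Hhead : sum_n a (pred m) = 0).
    { rewrite (sum_n_ext_loc a (fun _ => 0)).
      - rewrite sum_n_const. apply Rmult_0_r.
      - intros i Hi. unfold a.
        destruct (Nat.leb m i) eqn:E; [apply Nat.leb_le in E; lia | reflexivity]. }
    apply (is_series_decr_n _ m); [lia|].
    match goal with |- is_series _ ?l => replace l with (exp x - exp_partial (m - 1) x) end.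
    2:{ unfold plus, opp; simpl. replace (sum_n _ _) with 0 by exact (eq_sym Hhead). ring. }
    apply (is_series_ext (fun j => exp_term x (m + j))); [|now apply is_series_exp_shift].
    intro j. unfold a. rewrite (proj2 (Nat.leb_le m (m + j))) by lia. reflexivity. }
  rewrite (is_series_unique _ _ Ha), Rmult_minus_distr_l, exp_Ropp, Rinv_l
    by apply Rgt_not_eq, exp_pos.
  reflexivity.
Qed.

Lemma exp_partial_lt_exp j x : 0 < x -> exp_partial j x < exp x.
Proof.
  intro Hx. apply Rlt_le_trans with (exp_partial (S j) x).
  - unfold exp_partial. simpl. generalize (exp_term_pos x (S j) Hx). lra.
  - apply partial_sum_le_series; [apply is_series_exp|].
    intro i. left. now apply exp_term_pos.
Qed.

Lemma f_pos m x : (1 <= m)%nat -> 0 < x -> 0 < f m x.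
Proof.
  intros Hm Hx. rewrite f_closed by exact Hm.
  assert (Hlt := exp_partial_lt_exp (m - 1) x Hx).
  assert (Hexp : exp (- x) * exp x = 1) by (rewrite exp_Ropp; field; apply Rgt_not_eq, exp_pos).
  generalize (exp_pos (- x)). nra.
Qed.

Lemma f_le_1 m x : (1 <= m)%nat -> 0 < x -> f m x <= 1.
Proof.
  intros Hm Hx. rewrite f_closed by exact Hm.
  assert (0 <= exp_partial (m - 1) x).
  { apply cond_pos_sum. intro i. left. now apply exp_term_pos. }
  generalize (exp_pos (- x)). nra.
Qed.

Lemma is_derive_f m x : (1 <= m)%nat ->
  is_derive (f m) x (exp (- x) * exp_term x (m - 1)).
Proof.
  intro Hm.
  apply is_derive_ext with (fun y => 1 - exp (- y) * exp_partial (m - 1) y).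
  { intro y. symmetry. now apply f_closed. }
  auto_derive.
  - exists (exp_partial (m - 1) x - exp_term x (m - 1)). apply is_derive_exp_partial.
  - replace (Derive (fun y => exp_partial (m - 1) y) x)
      with (exp_partial (m - 1) x - exp_term x (m - 1)); [ring|].
    symmetry. apply is_derive_unique, is_derive_exp_partial.
Qed.

Lemma f_S m x : (1 <= m)%nat -> f (S m) x = f m x - exp (- x) * exp_term x m.
Proof.
  intro Hm. rewrite !f_closed by lia.
  replace (S m - 1)%nat with (S (m - 1)) by lia.
  unfold exp_partial; simpl. replace (S (m - 1)) with m by lia. ring.
Qed.

Definition tail_coef (m j : nat) : R := INR (fact m) / INR (fact (m + j)).

Definition tail_ratio (m : nat) (x : R) : R := (exp x - exp_partial (m - 1) x) / exp_term x m.

Lemma tail_coef_0 m : tail_coef m 0 = 1.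
Proof. unfold tail_coef. rewrite Nat.add_0_r. field. apply Rgt_not_eq, INR_fact_lt_0. Qed.

Lemma tail_coef_S m j : tail_coef m (S j) = tail_coef m j / INR (m + S j).
Proof.
  unfold tail_coef. rewrite Nat.add_succ_r, fact_simpl, mult_INR.
  assert (INR (S (m + j)) <> 0) by (apply not_0_INR; lia).
  assert (INR (fact (m + j)) <> 0) by apply Rgt_not_eq, INR_fact_lt_0.
  field. split; assumption.
Qed.

Lemma tail_coef_pos m j : 0 < tail_coef m j.
Proof. apply Rdiv_lt_0_compat; apply INR_fact_lt_0. Qed.

Lemma tail_coef_le_inv_fact m j : tail_coef m j <= / INR (fact j).
Proof.
  induction j as [|j IHj].
  - rewrite tail_coef_0. simpl. lra.
  - rewrite tail_coef_S, fact_simpl, mult_INR, Rinv_mult.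
    assert (Hj : INR (S j) <= INR (m + S j)) by (apply le_INR; lia).
    assert (0 < INR (S j)) by (apply lt_0_INR; lia).
    assert (0 < tail_coef m j) by apply tail_coef_pos.
    unfold Rdiv. rewrite Rmult_comm.
    apply Rmult_le_compat; [left; apply Rinv_0_lt_compat; lra | lra | | exact IHj].
    apply Rinv_le_contravar; lra.
Qed.

Lemma is_series_tail_ratio m x : (1 <= m)%nat -> 0 < x ->
  is_series (fun j => x ^ j * tail_coef m j) (tail_ratio m x).
Proof.
  intros Hm Hx.
  apply (is_series_ext (fun j => scal (/ exp_term x m) (exp_term x (m + j)))).
  - intro j. unfold scal, exp_term, tail_coef; simpl. unfold mult; simpl.
    rewrite pow_add.
    assert (0 < INR (fact (m + j))) by apply INR_fact_lt_0.
    assert (0 < INR (fact m)) by apply INR_fact_lt_0.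
    assert (0 < x ^ m) by (apply pow_lt; lra).
    field. repeat split; lra.
  - unfold tail_ratio. rewrite Rdiv_def, Rmult_comm.
    apply (is_series_scal (V := R_NormedModule)), is_series_exp_shift, Hm.
Qed.

Lemma f_eq_tail_ratio m x : (1 <= m)%nat -> 0 < x ->
  f m x = exp (- x) * exp_term x m * tail_ratio m x.
Proof.
  intros Hm Hx. rewrite f_closed by exact Hm. unfold tail_ratio.
  assert (exp_term x m <> 0) by (apply Rgt_not_eq, exp_term_pos, Hx).
  rewrite exp_Ropp. field. split; [assumption | apply Rgt_not_eq, exp_pos].
Qed.

Lemma f_le_exp_term m x : (1 <= m)%nat -> 0 < x -> f m x <= exp_term x m.
Proof.
  intros Hm Hx.
  assert (Hratio : tail_ratio m x <= exp x).
  { apply (is_series_le _ _ _ _ (is_series_tail_ratio m x Hm Hx) (is_series_exp x)).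
    intro j. unfold exp_term. rewrite Rdiv_def.
    apply Rmult_le_compat_l; [apply pow_le; lra | apply tail_coef_le_inv_fact]. }
  rewrite f_eq_tail_ratio by assumption.
  apply Rle_trans with (exp (- x) * exp_term x m * exp x).
  - apply Rmult_le_compat_l; [|exact Hratio].
    left. apply Rmult_lt_0_compat; [apply exp_pos | now apply exp_term_pos].
  - rewrite exp_Ropp. right. field. apply Rgt_not_eq, exp_pos.
Qed.

Lemma pow_ge_tangent (x M : R) (j : nat) : 0 <= x -> 0 < M ->
  M ^ j + INR j * M ^ pred j * (x - M) <= x ^ j.
Proof.
  intros Hx HM. induction j as [|[|j] IHj].
  - simpl. lra.
  - simpl. lra.
  - simpl pred in *. rewrite !S_INR in *.
    change (x ^ S (S j)) with (x * x ^ S j).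
    change (M ^ S (S j)) with (M * (M * M ^ j)).
    change (M ^ S j) with (M * M ^ j) in *.
    assert (0 <= INR j) by apply pos_INR.
    assert (0 < M ^ j) by (apply pow_lt; lra).
    assert (x * (M * M ^ j + (INR j + 1) * M ^ j * (x - M)) <= x * x ^ S j)
      by (apply Rmult_le_compat_l; lra).
    assert (0 <= M ^ j * (INR j + 1) * ((x - M) * (x - M)))
      by (apply Rmult_le_pos; [apply Rmult_le_pos; lra | apply Rle_0_sqr]).
    nra.
Qed.

Lemma is_series_tail_ratio_slope m : (1 <= m)%nat ->
  is_series (fun j => INR j * INR m ^ pred j * tail_coef m j) 1.
Proof.
  intro Hm. set (M := INR m).
  assert (HM : 0 < M) by (apply lt_0_INR; lia).
  set (e := fun j => M ^ j * tail_coef m j).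
  assert (He : is_series e (tail_ratio m M)) by now apply is_series_tail_ratio.
  assert (He1 : is_series (fun j => e (S j)) (tail_ratio m M - e 0%nat)).
  { apply is_series_incr_1.
    match goal with |- is_series _ ?l => replace l with (tail_ratio m M) end; [exact He|].
    unfold plus; simpl. ring. }
  apply is_series_decr_1.
  match goal with |- is_series _ ?l => replace l with (plus (tail_ratio m M) (opp (tail_ratio m M - e 0%nat))) end.
  2:{ unfold plus, opp, e; simpl. rewrite tail_coef_0. ring. }
  refine (is_series_ext _ _ _ _ (is_series_minus _ _ _ _ He He1)).
  intro j.
  assert (Hstep : e j - e (S j) = INR (S j) * M ^ j * tail_coef m (S j)).
  { unfold e. rewrite tail_coef_S.
    replace (INR (m + S j)) with (M + INR (S j)) by (unfold M; rewrite plus_INR; ring).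
    assert (0 < INR (S j)) by (apply lt_0_INR; lia).
    change (M ^ S j) with (M * M ^ j). field. lra. }
  exact Hstep.
Qed.

Lemma tail_ratio_min m x : (1 <= m)%nat -> 0 < x ->
  tail_ratio m (INR m) - INR m <= tail_ratio m x - x.
Proof.
  intros Hm Hx. set (M := INR m).
  assert (HM : 0 < M) by (apply lt_0_INR; lia).
  assert (Htangent := is_series_plus _ _ _ _ (is_series_tail_ratio m M Hm HM)
                        (is_series_scal (x - M) _ _ (is_series_tail_ratio_slope m Hm))).
  assert (tail_ratio m M + (x - M) * 1 <= tail_ratio m x); [|lra].
  apply (is_series_le _ _ _ _ Htangent (is_series_tail_ratio m x Hm Hx)).
  intro j. unfold plus, scal; simpl. unfold mult; simpl. fold M.
  generalize (pow_ge_tangent x M j (Rlt_le _ _ Hx) HM) (tail_coef_pos m j). nra.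
Qed.

Lemma tail_ratio_diag_ge m : (1 <= m)%nat ->
  let M := INR m in
  1 + M / (M + 1) * (1 + M / (M + 2) * (1 + M / (M + 3))) <= tail_ratio m M.
Proof.
  intros Hm M.
  assert (HM : 0 < M) by (apply lt_0_INR; lia).
  assert (Hsum := partial_sum_le_series _ _ 3 (is_series_tail_ratio m M Hm HM)).
  refine (Rle_trans _ _ _ (Req_le _ _ _) (Hsum _)).
  - simpl. rewrite !tail_coef_S, tail_coef_0.
    replace (INR (m + 1)) with (M + 1) by (unfold M; rewrite plus_INR; simpl; ring).
    replace (INR (m + 2)) with (M + 2) by (unfold M; rewrite plus_INR; simpl; ring).
    replace (INR (m + 3)) with (M + 3) by (unfold M; rewrite plus_INR; simpl; ring).
    field. repeat split; lra.
  - intro j. apply Rmult_le_pos; [apply pow_le; lra | left; apply tail_coef_pos].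
Qed.

Lemma one_lt_mul_tail_ratio_diag n m : (1 <= n)%nat -> (1 <= m)%nat -> (2 <= n * m)%nat ->
  1 < INR n * (tail_ratio m (INR m) - 1).
Proof.
  intros Hn Hm Hnm.
  assert (Hbound := tail_ratio_diag_ge m Hm). simpl in Hbound.
  set (M := INR m) in *. set (G := tail_ratio m M) in *.
  assert (HN : 1 <= INR n) by (apply (le_INR 1); exact Hn).
  destruct (Nat.eq_dec m 1) as [Hm1 | Hm2].
  - assert (HM : M = 1) by (unfold M; rewrite Hm1; reflexivity).
    assert (HN2 : 2 <= INR n) by (apply (le_INR 2); lia).
    rewrite HM in Hbound. nra.
  - assert (HM : 2 <= M) by (apply (le_INR 2); lia).
    set (u := M / (M + 1)) in *. set (v := M / (M + 2)) in *. set (w := M / (M + 3)) in *.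
    assert (Hu : 2 / 3 <= u) by (unfold u; apply Rmult_le_reg_r with (M + 1); field_simplify; lra).
    assert (Hv : 1 / 2 <= v) by (unfold v; apply Rmult_le_reg_r with (M + 2); field_simplify; lra).
    assert (Hw : 0 < w) by (unfold w; apply Rdiv_lt_0_compat; lra).
    assert (3 / 2 < 1 + v * (1 + w)) by nra.
    assert (1 < u * (1 + v * (1 + w))) by nra.
    nra.
Qed.

Lemma continuous_coercive_attains_min (g : R -> R) :
  (forall y, 0 < y -> continuity_pt g y) ->
  (forall y, 0 < y -> y <= 1 -> / y <= g y) ->
  (forall y, 0 < y -> y <= g y) ->
  exists mu, 0 < mu /\ forall x, 0 < x -> g mu <= g x.
Proof.
  intros Hcont Hnear0 Hfar.
  set (c := g 1).
  assert (Hc : 1 <= c) by (unfold c; rewrite <- Rinv_1 at 1; apply Hnear0; lra).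
  set (a := / (c + 1)).
  assert (Ha : 0 < a < 1) by (unfold a; split; [apply Rinv_0_lt_compat | rewrite <- Rinv_1;
                                apply Rinv_lt_contravar]; lra).
  destruct (continuity_ab_min g a (c + 1)) as [mu [Hmin Hmu]]; [lra | intros y Hy; apply Hcont; lra |].
  assert (Hmu1 : g mu <= c) by (apply Hmin; lra).
  exists mu. split; [lra|]. intros x Hx.
  destruct (Rlt_or_le x a) as [Hxa | Hxa]; [|destruct (Rle_or_lt x (c + 1)) as [Hxb | Hxb]].
  - assert (c + 1 < / x).
    { replace (c + 1) with (/ a) by (unfold a; rewrite Rinv_inv; reflexivity).
      apply Rinv_lt_contravar; nra. }
    generalize (Hnear0 x Hx ltac:(lra)). lra.
  - apply Hmin. lra.
  - generalize (Hfar x Hx). lra.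
Qed.

Lemma f_pow_le_sqr m n y : (1 <= m)%nat -> (2 <= m * n)%nat -> 0 < y -> y <= 1 ->
  f m y ^ n <= y ^ 2.
Proof.
  intros Hm Hmn Hy Hy1.
  assert (Hf : f m y <= y ^ m).
  { apply Rle_trans with (exp_term y m); [now apply f_le_exp_term|].
    assert (1 <= INR (fact m)) by (apply (le_INR 1), lt_O_fact).
    unfold exp_term, Rdiv. rewrite <- (Rmult_1_r (y ^ m)) at 2.
    apply Rmult_le_compat_l; [apply pow_le; lra|].
    rewrite <- Rinv_1. apply Rinv_le_contravar; lra. }
  apply Rle_trans with ((y ^ m) ^ n).
  { apply pow_incr. split; [left; now apply f_pos | exact Hf]. }
  rewrite <- pow_mult. replace (m * n)%nat with (2 + (m * n - 2))%nat by lia.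
  rewrite pow_add.
  assert (y ^ (m * n - 2) <= 1) by (rewrite <- (pow1 (m * n - 2)); apply pow_incr; lra).
  assert (0 <= y ^ 2) by (apply pow_le; lra).
  nra.
Qed.

Lemma is_derive_obj m n x : (1 <= m)%nat -> 0 < x ->
  is_derive (fun y => y / f m y ^ n) x
    ((f m x ^ n - x * (INR n * (exp (- x) * exp_term x (m - 1)) * f m x ^ pred n))
     / (f m x ^ n) ^ 2).
Proof.
  intros Hm Hx.
  assert (Hne : f m x ^ n <> 0) by (apply pow_nonzero, Rgt_not_eq, f_pos; assumption).
  rewrite <- (Rmult_1_l (f m x ^ n)) at 1.
  exact (is_derive_div _ _ _ _ _ (is_derive_id x) (is_derive_pow _ n _ _ (is_derive_f m x Hm)) Hne).
Qed.

Lemma obj_attains_min m n : (1 <= m)%nat -> (2 <= m * n)%nat ->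
  exists mu, 0 < mu /\ forall x, 0 < x -> mu / f m mu ^ n <= x / f m x ^ n.
Proof.
  intros Hm Hmn.
  assert (Hfn : forall y, 0 < y -> 0 < f m y ^ n <= 1).
  { intros y Hy. split; [apply pow_lt, f_pos; assumption|].
    rewrite <- (pow1 n). apply pow_incr. split; [left; now apply f_pos | now apply f_le_1]. }
  apply continuous_coercive_attains_min.
  - intros y Hy. apply derivable_continuous_pt.
    eexists. apply is_derive_Reals, is_derive_obj; assumption.
  - intros y Hy Hy1. destruct (Hfn y Hy) as [Hpos _].
    assert (Hsq := f_pow_le_sqr m n y Hm Hmn Hy Hy1).
    apply Rmult_le_reg_r with (f m y ^ n); [exact Hpos|].
    unfold Rdiv. rewrite Rmult_assoc, Rinv_l by lra.
    apply Rle_trans with (/ y * y ^ 2); [apply Rmult_le_compat_l; [left; apply Rinv_0_lt_compat |]; lra|].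
    right. field. lra.
  - intros y Hy. destruct (Hfn y Hy) as [Hpos Hle1].
    apply Rmult_le_reg_r with (f m y ^ n); [exact Hpos|].
    unfold Rdiv. rewrite Rmult_assoc, Rinv_l by lra. nra.
Qed.

Lemma obj_minimizer_crit m n mu : (1 <= m)%nat -> (1 <= n)%nat -> 0 < mu ->
  (forall x, 0 < x -> mu / f m mu ^ n <= x / f m x ^ n) ->
  f m mu = INR n * INR m * (exp (- mu) * exp_term mu m).
Proof.
  intros Hm Hn Hmu Hmin.
  set (F := f m mu). set (dF := exp (- mu) * exp_term mu (m - 1)).
  assert (HF : 0 < F) by (apply f_pos; assumption).
  assert (Hd := is_derive_obj m n mu Hm Hmu). fold F dF in Hd.
  assert (Hzero : (F ^ n - mu * (INR n * dF * F ^ pred n)) / (F ^ n) ^ 2 = 0).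
  { set (pr := exist _ _ (proj1 (is_derive_Reals _ _ _) Hd)
                 : derivable_pt (fun y => y / f m y ^ n) mu).
    apply (deriv_minimum _ 0 (mu + 1) mu pr Hmu ltac:(lra)).
    intros x Hx _. now apply Hmin. }
  assert (Hcrit : F = mu * INR n * dF).
  { replace (F ^ n) with (F * F ^ pred n) in Hzero by (destruct n; [lia | reflexivity]).
    assert (0 < F ^ pred n) by (apply pow_lt, HF).
    apply Rmult_integral in Hzero as [Hnum | Hinv].
    - assert (Hfactor : F ^ pred n * (F - mu * INR n * dF) = 0) by (rewrite <- Hnum; ring).
      apply Rmult_integral in Hfactor as [|]; lra.
    - exfalso. revert Hinv. apply Rinv_neq_0_compat, pow_nonzero. nra. }
  assert (Hshift : mu * exp_term mu (m - 1) = INR m * exp_term mu m).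
  { rewrite exp_term_S. now replace (S (m - 1)) with m by lia. }
  rewrite Hcrit. unfold dF.
  transitivity (INR n * exp (- mu) * (mu * exp_term mu (m - 1))); [ring|].
  rewrite Hshift. ring.
Qed.

Lemma tail_ratio_at_obj_minimizer m n mu : (1 <= m)%nat -> (1 <= n)%nat -> 0 < mu ->
  (forall x, 0 < x -> mu / f m mu ^ n <= x / f m x ^ n) ->
  tail_ratio m mu = INR n * INR m.
Proof.
  intros Hm Hn Hmu Hmin.
  assert (Hcrit := obj_minimizer_crit m n mu Hm Hn Hmu Hmin).
  rewrite f_eq_tail_ratio in Hcrit by assumption.
  assert (0 < exp (- mu) * exp_term mu m)
    by (apply Rmult_lt_0_compat; [apply exp_pos | now apply exp_term_pos]).
  apply Rmult_eq_reg_l with (exp (- mu) * exp_term mu m); [|lra].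
  rewrite Hcrit. ring.
Qed.

Lemma zeta_eq r m : (1 <= r)%nat -> (1 <= m)%nat -> 0 < mu_rk r (S m) ->
  let G := tail_ratio m (mu_rk r (S m)) in
  zeta r (S m) = mu_rk r (S m) * G / (G - 1).
Proof.
  intros Hr Hm Hmu G. unfold zeta, beta, alpha.
  set (mu := mu_rk r (S m)) in *.
  replace (S m - 1)%nat with m by lia.
  assert (Halpha := f_pos (S m) mu ltac:(lia) Hmu).
  rewrite f_S, f_eq_tail_ratio in * by assumption. fold G in Halpha |- *.
  assert (Hp : 0 < exp (- mu) * exp_term mu m)
    by (apply Rmult_lt_0_compat; [apply exp_pos | now apply exp_term_pos]).
  assert (Hr0 : INR r <> 0) by (apply not_0_INR; lia).
  assert (HG : G - 1 <> 0) by (intro HG1; replace G with 1 in Halpha by lra; lra).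
  field. split; [|split]; try assumption; lra.
Qed.

Theorem lemma50 (r k : nat) :
  (2 <= r)%nat -> (2 <= k)%nat -> ~ (r = 2%nat /\ k = 2%nat) ->
  zeta r k < INR r * (INR k - 1).
Proof.
  intros Hr Hk Hne.
  destruct r as [|n]; [lia|]. destruct k as [|m]; [lia|].
  assert (Hn : (1 <= n)%nat) by lia. assert (Hm : (1 <= m)%nat) by lia.
  (* (r, k) = (2, 2) is the case n m = 1, where the infimum is only approached as mu -> 0. *)
  assert (Hnm : (2 <= n * m)%nat) by (destruct n as [|[|n]], m as [|[|m]]; lia).
  assert (Hobj : forall y, obj (S n) (S m) y = y / f m y ^ n)
    by (intro y; unfold obj; now rewrite !Nat.sub_succ, !Nat.sub_0_r).
  assert (Hspec : is_min_obj (S n) (S m) (mu_rk (S n) (S m))).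
  { unfold mu_rk. apply epsilon_spec.
    destruct (obj_attains_min m n Hm ltac:(lia)) as [mu0 [Hmu0 Hmin0]].
    exists mu0. split; [exact Hmu0|]. intros x Hx. rewrite !Hobj. now apply Hmin0. }
  destruct Hspec as [Hmu Hmin].
  rewrite zeta_eq by (lia || assumption).
  set (mu := mu_rk (S n) (S m)) in *.
  assert (HG : tail_ratio m mu = INR n * INR m).
  { apply tail_ratio_at_obj_minimizer; try assumption.
    intros x Hx. rewrite <- !Hobj. now apply Hmin. }
  assert (Hslack := tail_ratio_min m mu Hm Hmu).
  assert (Hcurv := one_lt_mul_tail_ratio_diag n m Hn Hm Hnm).
  rewrite HG in *. rewrite !S_INR. replace (INR m + 1 - 1) with (INR m) by ring.
  assert (HNM : 2 <= INR n * INR m) by (rewrite <- mult_INR; apply (le_INR 2); exact Hnm).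
  assert (HM : 1 <= INR m) by (apply (le_INR 1); exact Hm).
  apply Rmult_lt_reg_r with (INR n * INR m - 1); [lra|].
  unfold Rdiv. rewrite Rmult_assoc, Rinv_l by lra.
  nra.
Qed.
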